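(* Let $W=(Y,Z)$ be a random vector with $Y$ real-valued and $\mathbb{E}[Y^2]<\infty$, and let $g_0(Z):=\mathbb{E}[Y\mid Z]$. Let $m(W;g)$ be a moment functional such that $g\mapsto \mathbb{E}[m(W;g)]$ is a continuous linear functional on $\{g:\mathbb{E}[g(Z)^2]<\infty\}$, with Riesz representer $\alpha_0$, i.e. $\alpha_0(Z)$ is square-integrable and $\mathbb{E}[m(W;g)]=\mathbb{E}[\alpha_0(Z)g(Z)]$ for all $g$ with $\mathbb{E}[g(Z)^2]<\infty$. Let $\theta_0:=\mathbb{E}[m(W;g_0)]$, let $A:=\alpha_0(Z)$ and let $h_0(a):=\mathbb{E}[Y\mid A=a]$. Then $$\theta_0=\mathbb{E}[m(W;h_0\circ\alpha_0)]=\mathbb{E}[h_0(\alpha_0(Z))\,\alpha_0(Z)].$$ That is, to estimate $\theta_0$ it suffices to estimate the regression function $h_0\circ\alpha_0$, which conditions only on the value of the Riesz representer.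
   Context: Here $h_0\circ\alpha_0$ denotes the function $z\mapsto h_0(\alpha_0(z))$, which is square-integrable as a function of $Z$ since it is a conditional expectation of the square-integrable $Y$. *)

From HB Require Import structures.
From mathcomp Require Import all_boot all_order all_algebra.
From mathcomp Require Import all_classical all_reals all_analysis.
Set Implicit Arguments. Unset Strict Implicit. Unset Printing Implicit Defensive.
Import Order.TTheory GRing.Theory Num.Theory.
Local Open Scope classical_set_scope.
Local Open Scope ring_scope.

Definition sq_integrable (d : measure_display) (T : measurableType d)
  (R : realType) (P : probability T R) (f : T -> R) : Prop :=
  measurable_fun setT f /\ P.-integrable setT (fun x => ((f x) ^+ 2)%:E).

(* g is a version of the conditional expectation E[Y | Z], i.e.
   g(Z) = E[Y | sigma(Z)]: g is measurable, g(Z) is integrable and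
   E[Y 1_{Z in B}] = E[g(Z) 1_{Z in B}] for every measurable B. *)
Definition is_cond_exp (d : measure_display) (T : measurableType d)
  (R : realType) (P : probability T R) (d' : measure_display)
  (U : measurableType d') (Y : T -> R) (Z : T -> U) (g : U -> R) : Prop :=
  [/\ measurable_fun setT g,
      P.-integrable setT (fun x => (g (Z x))%:E) &
      forall B : set U, measurable B ->
        (\int[P]_(x in Z @^-1` B) (Y x)%:E
         = \int[P]_(x in Z @^-1` B) (g (Z x))%:E)%E].

From HB Require Import structures.
From mathcomp Require Import all_boot all_order all_algebra.
From mathcomp Require Import all_classical all_reals all_analysis.
From mathcomp Require Import measurable_realfun lra.
Import Order.TTheory GRing.Theory Num.Theory.
Local Open Scope classical_set_scope.
Local Open Scope ring_scope.

(* If g(V) is a version of E[Y | V], then k := Y - g(V) integrates to 0 over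
   every set V^-1(B).  Approximating a nonnegative f from below by simple
   functions (monotone convergence) and splitting k and f into positive and
   negative parts gives E[f(V) k] = 0 whenever f(V) k is integrable.  Applied to
   truncations of g, this bounds E[g(V)^2] by E[Y^2], so all the conditional
   expectations involved are square-integrable and the Riesz identity applies
   to them.  Then E[alpha0(Z) g0(Z)] = E[alpha0(Z) Y] = E[alpha0(Z) h0(alpha0(Z))],
   the second step conditioning on A = alpha0(Z), of which alpha0(Z) is itself
   a function. *)

Section clamp.
Context {R : realDomainType}.
Implicit Types (n m : nat) (r : R).

Definition clamp n r : R := Num.max (- n%:R) (Num.min r n%:R).

Lemma clamp_norm_le n r : `|clamp n r| <= n%:R.
Proof.
rewrite /clamp; have n0 : 0 <= n%:R :> R by [].
by case: (lerP r n%:R) => ?; case: (lerP (- n%:R) _) => ?;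
   rewrite ler_norml; apply/andP; split; lra.
Qed.

Lemma clamp_sqr_le_mul n r : clamp n r ^+ 2 <= clamp n r * r.
Proof.
rewrite /clamp expr2; have n0 : 0 <= n%:R :> R by [].
by case: (lerP r n%:R) => ?; case: (lerP (- n%:R) _) => ?; nra.
Qed.

Lemma clamp_id n r : `|r| <= n%:R -> clamp n r = r.
Proof.
rewrite ler_norml /clamp => /andP[? ?].
by case: (lerP r n%:R) => ?; case: (lerP (- n%:R) _) => ?; lra.
Qed.

Lemma clamp_sqr_nondecreasing n m r :
  (n <= m)%N -> clamp n r ^+ 2 <= clamp m r ^+ 2.
Proof.
rewrite -(ler_nat R) /clamp !expr2 => nm; have n0 : 0 <= n%:R :> R by [].
by case: (lerP r n%:R) => ?; case: (lerP (- n%:R) _) => ?;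
   case: (lerP r m%:R) => ?; case: (lerP (- m%:R) _) => ?; nra.
Qed.

End clamp.

Section funrposneg_norm.
Context {aT : Type} {R : realDomainType}.

Lemma normr_funrpos_le (F : aT -> R) x : `|F^\+ x| <= `|F x|.
Proof. by rewrite /funrpos; have [|] := lerP 0 (F x); rewrite ?normr0. Qed.

Lemma normr_funrneg_le (F : aT -> R) x : `|F^\- x| <= `|F x|.
Proof. by rewrite -funrposN -(normrN (F x)) normr_funrpos_le. Qed.

End funrposneg_norm.

Lemma measurable_clamp {d} {T : measurableType d} {R : realType} {D : set T}
    {f : T -> R} n :
  measurable_fun D f -> measurable_fun D (fun x => clamp n (f x)).
Proof. by move=> mf; apply: measurable_maxr => //; exact: measurable_minr. Qed.

Section square_integrable.
Context {d} {T : measurableType d} {R : realType} {mu : {measure set T -> \bar R}}.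
Local Open Scope ereal_scope.

Lemma integrable_sqr_Lfun2 (f : T -> R) : measurable_fun setT f ->
  mu.-integrable setT (fun x => (f x ^+ 2)%:E) -> f \in Lfun mu 2%:E.
Proof.
move=> mf /integrableP[_ if2]; rewrite inE; apply/andP; split; rewrite inE//=.
rewrite /finite_norm unlock; apply: poweR_lty.
by under eq_integral do rewrite /= powR_mulrn ?normr_ge0// -normrX.
Qed.

Lemma integrable_sqr_of_clamp {f : T -> R} {M : \bar R} :
  measurable_fun setT f ->
  (forall n, \int[mu]_x ((clamp n (f x)) ^+ 2)%:E <= M) -> M < +oo ->
  mu.-integrable setT (fun x => (f x ^+ 2)%:E).
Proof.
move=> mf clampM Moo.
have mclamp2 n : measurable_fun setT (fun x => ((clamp n (f x)) ^+ 2)%:E).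
  by apply/measurable_EFinP; apply/measurable_funX/measurable_clamp.
have clamp2_ge0 n x : 0 <= ((clamp n (f x)) ^+ 2)%:E by rewrite lee_fin sqr_ge0.
have clamp2_nd x :
    {homo (fun n => ((clamp n (f x)) ^+ 2)%:E) : n m / (n <= m)%N >-> n <= m}.
  by move=> n m nm; rewrite lee_fin clamp_sqr_nondecreasing.
have mct : \int[mu]_x (f x ^+ 2)%:E =
    limn (fun n => \int[mu]_x ((clamp n (f x)) ^+ 2)%:E).
  rewrite -monotone_convergence //; apply: eq_integral => x _.
  apply/esym/cvg_lim => //; apply: cvg_near_cst.
  exists (Num.bound `|f x|) => // n /= fxn.
  rewrite clamp_id //; apply: le_trans (ltW (archi_boundP (normr_ge0 _))) _.
  by rewrite ler_nat.
apply/integrableP; split; first by apply/measurable_EFinP/measurable_funX.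
under eq_integral do rewrite gee0_abs ?lee_fin ?sqr_ge0//.
rewrite mct; apply: le_lt_trans Moo; apply: lime_le; last exact: nearW.
apply: ereal_nondecreasing_is_cvgn => n m nm; apply: ge0_le_integral => //.
by move=> x _; exact: clamp2_nd.
Qed.

Lemma integrable_sqr_mul {f g : T -> R} :
  measurable_fun setT f -> measurable_fun setT g ->
  mu.-integrable setT (fun x => (f x ^+ 2)%:E) ->
  mu.-integrable setT (fun x => (g x ^+ 2)%:E) ->
  mu.-integrable setT (fun x => (f x * g x)%:E).
Proof.
move=> mf mg if2 ig2; apply/Lfun1_integrable/Lfun2_mul_Lfun1.
- exact: integrable_sqr_Lfun2.
- exact: integrable_sqr_Lfun2.
Qed.

Lemma integrable_of_sqr {f : T -> R} :
  mu setT \is a fin_num -> measurable_fun setT f ->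
  mu.-integrable setT (fun x => (f x ^+ 2)%:E) -> mu.-integrable setT (EFin \o f).
Proof.
move=> mu_fin mf if2; apply/Lfun1_integrable/(Lfun_subset12 mu_fin).
exact: integrable_sqr_Lfun2.
Qed.

End square_integrable.

Lemma sube0_eq (R : realDomainType) (x y : \bar R) :
  y \is a fin_num -> (x - y = 0)%E -> x = y.
Proof. by move=> yfin xy0; rewrite -(subeK x yfin) xy0 add0e. Qed.

Section preimage_integral.
Context {d d'} {T : measurableType d} {U : measurableType d'} {R : realType}.
Variables (mu : {measure set T -> \bar R}) (V : T -> U).
Hypothesis mV : measurable_fun setT V.
Local Open Scope ereal_scope.
Import HBNNSimple.

Lemma integral_funrposneg {D : set T} {F : T -> R} : measurable D ->
  mu.-integrable D (EFin \o F) ->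
  \int[mu]_(x in D) (F x)%:E =
  \int[mu]_(x in D) (F^\+ x)%:E - \int[mu]_(x in D) (F^\- x)%:E.
Proof.
move=> mD iF; rewrite -integralB_EFin//; last 2 first.
- exact: integrable_funrpos.
- exact: integrable_funrneg.
by apply: eq_integral => x _; rewrite -EFinB -[in LHS](funrposBneg F).
Qed.

Lemma integral_nnsfun_comp_mul (h : {nnsfun U >-> R}) (g : T -> R) :
  measurable_fun setT g -> (forall x, (0 <= g x)%R) ->
  \int[mu]_x (h (V x) * g x)%:E =
  \sum_(y \in range h) y%:E * \int[mu]_(x in V @^-1` (h @^-1` [set y])) (g x)%:E.
Proof.
move=> mg g0.
have mVh y : measurable (V @^-1` (h @^-1` [set y])).
  by rewrite -[X in measurable X]setTI; apply: mV => //; exact: measurable_sfunP.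
have mindic y : measurable_fun setT (fun x => \1_(h @^-1` [set y]) (V x) : R).
  by apply: measurableT_comp mV; apply/measurable_indicP; exact: measurable_sfunP.
under eq_integral => x _.
  rewrite EFinM fimfunE -fsumEFin // ge0_mule_fsuml; last first.
    by move=> y; exact: nnfun_muleindic_ge0.
  over.
rewrite ge0_integral_fsum //; last 2 first.
- move=> y; apply: emeasurable_funM; last exact/measurable_EFinP.
  by apply/measurable_EFinP; apply: measurable_funM.
- by move=> y x _; rewrite mule_ge0// ?nnfun_muleindic_ge0 ?lee_fin.
apply: eq_fsbigr => y yh.
under eq_integral do rewrite EFinM -muleA.
rewrite ge0_integralZl//; last 3 first.
- by apply: emeasurable_funM; apply/measurable_EFinP.
- by move=> x _; rewrite mule_ge0// lee_fin.
- by move: yh; rewrite inE => -[t _ <-]; rewrite lee_fin.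
rewrite -(setTI (V @^-1` _)) integral_mkcondr epatch_indic.
by congr (_ * _); apply: eq_integral => x _ /=; rewrite muleC.
Qed.

Lemma ge0_integral_comp_mul_eq (g1 g2 : T -> R) :
  measurable_fun setT g1 -> measurable_fun setT g2 ->
  (forall x, (0 <= g1 x)%R) -> (forall x, (0 <= g2 x)%R) ->
  (forall B, measurable B -> \int[mu]_(x in V @^-1` B) (g1 x)%:E
                          = \int[mu]_(x in V @^-1` B) (g2 x)%:E) ->
  forall f : U -> R, measurable_fun setT f -> (forall u, (0 <= f u)%R) ->
  \int[mu]_x (f (V x) * g1 x)%:E = \int[mu]_x (f (V x) * g2 x)%:E.
Proof.
move=> mg1 mg2 g10 g20 g12 f mf f0.
have mEf : measurable_fun setT (EFin \o f) by exact/measurable_EFinP.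
have Ef0 u : setT u -> 0 <= (EFin \o f) u by rewrite lee_fin.
pose h := nnsfun_approx measurableT mEf.
have limn_approx (g : T -> R) : measurable_fun setT g -> (forall x, (0 <= g x)%R) ->
    \int[mu]_x (f (V x) * g x)%:E = limn (fun n => \int[mu]_x (h n (V x) * g x)%:E).
  move=> mg g0; under eq_integral do rewrite EFinM.
  under [X in limn X]eq_fun do under eq_integral do rewrite EFinM.
  rewrite -monotone_convergence //.
  - apply: eq_integral => x _; apply/esym/cvg_lim => //; apply: cvgeZr => //.
    exact: (cvg_nnsfun_approx measurableT mEf Ef0 (I : setT (V x))).
  - move=> n; apply: emeasurable_funM; last exact/measurable_EFinP.
    by apply/measurable_EFinP; apply: measurableT_comp mV; exact: measurable_funPT.
  - by move=> n x _; rewrite mule_ge0// lee_fin.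
  - move=> x _ n m nm; rewrite lee_wpmul2r ?lee_fin//.
    exact/lefP/nd_nnsfun_approx.
rewrite (limn_approx g1) // (limn_approx g2) //; congr (limn _); apply/funext => n.
by rewrite !integral_nnsfun_comp_mul //; apply: eq_fsbigr => y _; rewrite g12.
Qed.

Lemma integral_comp_mul_eq0 (k : T -> R) : mu.-integrable setT (EFin \o k) ->
  (forall B, measurable B -> \int[mu]_(x in V @^-1` B) (k x)%:E = 0) ->
  forall f : U -> R, measurable_fun setT f ->
  mu.-integrable setT (fun x => (f (V x) * k x)%:E) ->
  \int[mu]_x (f (V x) * k x)%:E = 0.
Proof.
move=> ik k0 f mf ifk.
have mk : measurable_fun setT k by apply/measurable_EFinP; exact: measurable_int ik.
have k_parts B : measurable B ->
    \int[mu]_(x in V @^-1` B) (k^\+ x)%:E = \int[mu]_(x in V @^-1` B) (k^\- x)%:E.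
  move=> mB; have mVB : measurable (V @^-1` B).
    by rewrite -[X in measurable X]setTI; exact: mV.
  have ikB : mu.-integrable (V @^-1` B) (EFin \o k) by exact: integrableS ik.
  apply: sube0_eq; last by rewrite -integral_funrposneg // k0.
  by apply: integrable_fin_num => //; exact: integrable_funrneg.
have ge0_case (c : U -> R) : measurable_fun setT c -> (forall u, 0 <= c u)%R ->
    mu.-integrable setT (fun x => (c (V x) * k x)%:E) ->
    \int[mu]_x (c (V x) * k x)%:E = 0.
  move=> mc c0 ick.
  have ckpos : (fun x => c (V x) * k x)^\+%R = (fun x => c (V x) * k^\+ x)%R.
    by apply/funext => x; rewrite /funrpos maxr_pMr // mulr0.
  have ckneg : (fun x => c (V x) * k x)^\-%R = (fun x => c (V x) * k^\- x)%R.
    by apply/funext => x; rewrite /funrneg -mulrN maxr_pMr // mulr0.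
  have := integrable_funrneg measurableT ick; rewrite ckneg => ickn.
  rewrite (integral_funrposneg measurableT ick) ckpos ckneg.
  rewrite (ge0_integral_comp_mul_eq _ _ (measurable_funrpos mk) (measurable_funrneg mk)
    (funrpos_ge0 k) (funrneg_ge0 k) k_parts _ mc c0).
  by rewrite subee // integrable_fin_num.
have ifck (c : U -> R) : measurable_fun setT c -> (forall u, `|c u| <= `|f u|)%R ->
    mu.-integrable setT (EFin \o (fun x => c (V x) * k x)%R).
  move=> mc cf; apply: le_integrable ifk => //.
    by apply/measurable_EFinP/measurable_funM => //; exact: measurableT_comp.
  by move=> x _; rewrite lee_fin !normrM ler_wpM2r.
have [mfp mfn] := (measurable_funrpos mf, measurable_funrneg mf).
have [ifpk ifnk] := (ifck _ mfp (normr_funrpos_le f), ifck _ mfn (normr_funrneg_le f)).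
rewrite (eq_integral (fun x => (f^\+ (V x) * k x)%:E - (f^\- (V x) * k x)%:E));
  last first.
  by move=> x _; rewrite -EFinB -mulrBl -[in LHS](funrposBneg f).
by rewrite integralB_EFin // !ge0_case // sube0.
Qed.
End preimage_integral.

Arguments integral_comp_mul_eq0 {d d' T U R mu V} mV {k}.

Section cond_exp.
Context {d d'} {T : measurableType d} {U : measurableType d'} {R : realType}.
Context {P : probability T R} {V : T -> U} {Y : T -> R} {h : U -> R}.
Hypotheses (mV : measurable_fun setT V) (iY : P.-integrable setT (EFin \o Y)).
Hypothesis hY : is_cond_exp P Y V h.
Local Open Scope ereal_scope.

Lemma cond_exp_integral_mul (f : U -> R) : measurable_fun setT f ->
  P.-integrable setT (fun x => (f (V x) * Y x)%:E) ->
  P.-integrable setT (fun x => (f (V x) * h (V x))%:E) ->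
  \int[P]_x (f (V x) * Y x)%:E = \int[P]_x (f (V x) * h (V x))%:E.
Proof.
move=> mf ifY ifh; have [mh ih hYB] := hY.
have iYh : P.-integrable setT (EFin \o (fun x => Y x - h (V x))%R).
  by apply: eq_integrable (integrableB _ iY ih).
have ifYh : P.-integrable setT (fun x => (f (V x) * (Y x - h (V x)))%:E).
  apply: eq_integrable (integrableB _ ifY ifh) => // x _.
  by rewrite /= -EFinB mulrBr.
have hB0 B : measurable B -> \int[P]_(x in V @^-1` B) (Y x - h (V x))%:E = 0.
  move=> mB; have mVB : measurable (V @^-1` B).
    by rewrite -[X in measurable X]setTI; exact: mV.
  have [iYB ihB] := (integrableS measurableT mVB (subsetT _) iY,
                     integrableS measurableT mVB (subsetT _) ih).
  by rewrite integralB_EFin // hYB // subee // integrable_fin_num.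
have := integral_comp_mul_eq0 mV iYh hB0 _ mf ifYh.
under eq_integral do rewrite mulrBr EFinB.
by rewrite integralB_EFin // => /sube0_eq; apply; exact: integrable_fin_num.
Qed.

(* For the truncation [c] of [h]: [c^2 <= c h] pointwise, [E[c(V) h(V)] = E[c(V) Y]]
   and [2 c(V) Y <= c(V)^2 + Y^2], whence [E[c(V)^2] <= E[Y^2]]. *)
Lemma cond_exp_clamp_sqr_le n : P.-integrable setT (fun x => (Y x ^+ 2)%:E) ->
  \int[P]_x (clamp n (h (V x)) ^+ 2)%:E <= \int[P]_x (Y x ^+ 2)%:E.
Proof.
move=> iY2; have [mh ih _] := hY.
pose c u := clamp n (h u).
have mc : measurable_fun setT c := measurable_clamp _ mh.
have mcV : measurable_fun setT (c \o V) := measurableT_comp mc mV.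
have bcV : [bounded c (V x) | x in setT].
  exists n%:R; split => // M nM x _.
  exact: le_trans (clamp_norm_le _ _) (ltW nM).
have icV (G : T -> R) : P.-integrable setT (EFin \o G) ->
    P.-integrable setT (fun x => (c (V x) * G x)%:E).
  by move=> iG; apply: eq_integrable (integrableMr _ mcV bcV iG).
have PT : P setT < +oo by rewrite probability_setT ltry.
have icc := icV _ (measurable_bounded_integrable measurableT PT mcV bcV).
have [icY ich] := (icV _ iY, icV _ ih).
have tower := cond_exp_integral_mul _ mc icY ich.
have a_fin : \int[P]_x (c (V x) * c (V x))%:E \is a fin_num.
  exact: integrable_fin_num.
have clamp_le :
    \int[P]_x (c (V x) * c (V x))%:E <= \int[P]_x (c (V x) * Y x)%:E.
  rewrite tower; apply: le_integral => // x _.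
  by rewrite lee_fin -expr2 clamp_sqr_le_mul.
have amgm : \int[P]_x (c (V x) * Y x)%:E + \int[P]_x (c (V x) * Y x)%:E <=
    \int[P]_x (c (V x) * c (V x))%:E + \int[P]_x (Y x ^+ 2)%:E.
  rewrite -!integralD //; apply: le_integral; rewrite ?integrableD // => x _.
  by rewrite -!EFinD lee_fin; have := sqr_ge0 (c (V x) - Y x); rewrite !expr2; nra.
rewrite (eq_integral (fun x => (c (V x) * c (V x))%:E)) => [|x _];
  last by rewrite expr2.
by rewrite -(leeD2lE _ _ a_fin); apply: le_trans (leeD clamp_le clamp_le) amgm.
Qed.

Lemma cond_exp_sqr_integrable : P.-integrable setT (fun x => (Y x ^+ 2)%:E) ->
  P.-integrable setT (fun x => (h (V x) ^+ 2)%:E).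
Proof.
move=> iY2; have [mh _ _] := hY.
apply: (integrable_sqr_of_clamp (measurableT_comp mh mV)
  (cond_exp_clamp_sqr_le ^~ iY2)).
have /integrableP[_] := iY2.
by under eq_integral do rewrite gee0_abs ?lee_fin ?sqr_ge0//.
Qed.

End cond_exp.

Theorem lemma1 (d : measure_display) (T : measurableType d) (R : realType)
  (P : probability T R) (d' : measure_display) (Zt : measurableType d')
  (Y : T -> R) (Z : T -> Zt)
  (m : R * Zt -> (Zt -> R) -> R) (alpha0 g0 : Zt -> R) (h0 : R -> R) :
  sq_integrable P Y ->
  measurable_fun setT Z ->
  is_cond_exp P Y Z g0 ->
  measurable_fun setT alpha0 ->
  sq_integrable P (alpha0 \o Z) ->
  (forall g : Zt -> R, measurable_fun setT g -> sq_integrable P (g \o Z) ->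
     P.-integrable setT (fun x => (m (Y x, Z x) g)%:E) /\
     (\int[P]_x (m (Y x, Z x) g)%:E
      = \int[P]_x (alpha0 (Z x) * g (Z x))%:E)%E) ->
  is_cond_exp P Y (alpha0 \o Z) h0 ->
  (\int[P]_x (m (Y x, Z x) g0)%:E
   = \int[P]_x (m (Y x, Z x) (h0 \o alpha0))%:E)%E /\
  (\int[P]_x (m (Y x, Z x) (h0 \o alpha0))%:E
   = \int[P]_x (h0 (alpha0 (Z x)) * alpha0 (Z x))%:E)%E.
Proof.
move=> [mY iY2] mZ g0_ce malpha0 [mA iA2] riesz h0_ce.
have iY : P.-integrable setT (EFin \o Y).
  by apply: integrable_of_sqr mY iY2; exact: fin_num_measure.
have [[mg0 _ _] [mh0 _ _]] := (g0_ce, h0_ce).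
have [mg0Z mh0A] := (measurableT_comp mg0 mZ, measurableT_comp mh0 mA).
have g0Z2 := cond_exp_sqr_integrable mZ iY g0_ce iY2.
have h0A2 := cond_exp_sqr_integrable mA iY h0_ce iY2.
have [_ ->] := riesz g0 mg0 (conj mg0Z g0Z2).
have [_ ->] := riesz (h0 \o alpha0) (measurableT_comp mh0 malpha0) (conj mh0A h0A2).
split; last by apply: eq_integral => x _; rewrite mulrC.
have iAY := integrable_sqr_mul mA mY iA2 iY2.
rewrite -(cond_exp_integral_mul mZ iY g0_ce _ malpha0 iAY); last first.
  exact: integrable_sqr_mul mA mg0Z iA2 g0Z2.
exact: (cond_exp_integral_mul mA iY h0_ce id (@measurable_id _ _ setT) iAY
  (integrable_sqr_mul mA mh0A iA2 h0A2)).
Qed.
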